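(* Consider the equation $x'(t)+p(t)\,x(\tau(t))=0$, $t\ge t_0$, where $p,\tau:[t_0,\infty)\to[0,\infty)$ are continuous, $\tau(t)\le t$ and $\lim_{t\to\infty}\tau(t)=\infty$. Let $\sigma:[t_0,\infty)\to\mathbb{R}$ be continuous and non-decreasing with $\tau(t)\le\sigma(t)\le t$ for $t\ge t_0$. If $$\limsup_{t\to+\infty}\int_{\sigma(t)}^{t}p(s)\exp\Bigg(\int_{\tau(s)}^{\sigma(t)}p(\xi)\exp\bigg(\int_{\tau(\xi)}^{\xi}p(u)\,du\bigg)d\xi\Bigg)ds>1,$$ then all solutions of this equation oscillate.
   Context: A solution is a function $x\in C([T_0,\infty);\mathbb{R})$ for some $T_0\ge t_0$, continuously differentiable on $[\tau_{(-1)}(T_0),\infty)$ where $\tau_{(-1)}(t)=\sup\{s:\tau(s)\le t\}$, satisfying the equation for $t\ge\tau_{(-1)}(T_0)$. It is oscillatory if it has arbitrarily large zeros; ''all solutions oscillate'' means every solution is oscillatory. *)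

From Stdlib Require Import Reals Lra ClassicalEpsilon.
Open Scope R_scope.

(* Total (oriented) Riemann integral: the value of RiemannInt when f is
   Riemann integrable between a and b, and 0 otherwise.  The value of
   RiemannInt does not depend on the integrability proof (RiemannInt_P5). *)
Definition Int (f : R -> R) (a b : R) : R :=
  match excluded_middle_informative
          (exists v, exists pr : Riemann_integrable f a b, RiemannInt pr = v) with
  | left H => proj1_sig (constructive_indefinite_description _ H)
  | right _ => 0
  end.

Definition cont_from (a : R) (f : R -> R) : Prop :=
  forall t, a <= t -> limit1_in f (fun y => a <= y) (f t) t.

Definition deriv_from (a : R) (f d : R -> R) : Prop :=
  forall t, a <= t ->
    limit1_in (fun y => (f y - f t) / (y - t)) (fun y => a <= y /\ y <> t) (d t) t.

(* limsup_{t -> +oo} F(t) > a, written out: inf_T sup_{t >= T} F(t) > a. *)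
Definition limsup_gt (F : R -> R) (a : R) : Prop :=
  exists c, a < c /\ forall T, exists t, T <= t /\ c < F t.

(* Solution of x'(t) + p(t) x(tau(t)) = 0 : x continuous on [T0,+oo), with
   T0 >= t0, continuously differentiable on [T1,+oo) where
   T1 = tau_(-1)(T0) = sup {s >= t0 : tau(s) <= T0}, satisfying the equation
   for t >= T1 (the derivative -p(t) x(tau(t)) is then automatically continuous). *)
Definition is_solution (t0 : R) (p tau x : R -> R) : Prop :=
  exists T0 T1, t0 <= T0 /\
    is_lub (fun s => t0 <= s /\ tau s <= T0) T1 /\
    cont_from T0 x /\
    deriv_from T1 x (fun t => - (p t * x (tau t))).

Definition oscillatory (x : R -> R) : Prop :=
  forall T, exists t, T <= t /\ x t = 0.

From Pilot Require Import Defs.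
From Stdlib Require Import Reals Lra Classical ClassicalEpsilon.
From Coquelicot Require Import Coquelicot.
(* Coquelicot also defines an [Int]; the integral of the statement is ours. *)
Import Pilot.Defs.
Open Scope R_scope.

(* Suppose a solution x is not oscillatory.  Being continuous
   and zero-free on a half-line, it keeps a constant sign there, and since -x is
   again a solution we may assume x > 0 eventually.  Then, far enough out:
   - x is non-increasing (x' = -p x(tau) <= 0);
   - ln x has derivative -g with g = p x(tau)/x >= p, because x(tau u) >= x(u);
   - integrating p <= g over [tau xi, xi] gives
       h(xi) := p(xi) exp(int_{tau xi}^{xi} p) <= g(xi);
   - integrating h <= g over [tau s, sigma t] gives
       p(s) exp(int_{tau s}^{sigma t} h) <= p(s) x(tau s) / x(sigma t);
   - integrating this over [sigma t, t] gives a value at most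
       (x(sigma t) - x t) / x(sigma t) < 1,
   contradicting the limsup hypothesis.  Every integral estimate is one
   instance of a comparison lemma: if Phi' = -psi with psi continuous and
   nonnegative, then int_a^b f <= Phi a - Phi b whenever f <= psi. *)

Lemma Int_spec (f : R -> R) (a b : R) :
  Int f a b = 0 \/ exists pr : Riemann_integrable f a b, Int f a b = RiemannInt pr.
Proof.
  unfold Int; destruct excluded_middle_informative as [H|H].
  - right. destruct constructive_indefinite_description as [v [pr Hv]]; simpl.
    now exists pr.
  - now left.
Qed.

Lemma continuity_pt_of_cont_from (a : R) (f : R -> R) (t : R) :
  cont_from a f -> a < t -> continuity_pt f t.
Proof.
  intros H Ht eps Heps. destruct (H t (Rlt_le _ _ Ht) eps Heps) as [alp [Halp H2]].
  exists (Rmin alp (t - a)). split; [apply Rmin_glb_lt; lra|].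
  intros y [_ Hy]. apply H2. simpl in *. unfold R_dist in *.
  assert (Hm1 := Rmin_l alp (t - a)). assert (Hm2 := Rmin_r alp (t - a)).
  split; [|lra]. apply Rabs_def2 in Hy. lra.
Qed.

Lemma derivable_pt_lim_of_deriv_from (a : R) (f d : R -> R) (t : R) :
  deriv_from a f d -> a < t -> derivable_pt_lim f t (d t).
Proof.
  intros H Ht eps Heps. destruct (H t (Rlt_le _ _ Ht) eps Heps) as [alp [Halp H2]].
  assert (Hpos : 0 < Rmin alp (t - a)) by (apply Rmin_glb_lt; lra).
  exists (mkposreal _ Hpos). intros h Hh Hh2. simpl in Hh2.
  assert (Hm1 := Rmin_l alp (t - a)). assert (Hm2 := Rmin_r alp (t - a)).
  specialize (H2 (t + h)). simpl in H2. unfold R_dist in H2.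
  replace (t + h - t) with h in H2 by ring. apply H2.
  apply Rabs_def2 in Hh2. repeat split; try lra.
  replace (t + h - t) with h by ring.
  destruct (Rle_dec 0 h); [rewrite Rabs_right|rewrite Rabs_left]; lra.
Qed.

Lemma antiderivative_comparison (Phi psi f : R -> R) (a b : R) :
  a <= b ->
  (forall u, a <= u <= b -> derivable_pt_lim Phi u (- psi u)) ->
  (forall u, a <= u <= b -> continuity_pt psi u) ->
  (forall u, a <= u <= b -> 0 <= psi u) ->
  (forall u, a < u < b -> f u <= psi u) ->
  0 <= Phi a - Phi b /\ Int f a b <= Phi a - Phi b.
Proof.
  intros Hab Hd Hc Hn Hf.
  assert (Hftc : is_RInt psi a b (Phi a - Phi b)).
  { assert (Hneg : is_RInt (fun u => - psi u) a b (minus (Phi b) (Phi a))).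
    { apply (@is_RInt_derive R_CompleteNormedModule);
        rewrite Rmin_left, Rmax_right by lra; intros u Hu.
      - apply is_derive_Reals, Hd; lra.
      - apply continuity_pt_filterlim, (continuity_pt_opp psi), Hc; lra. }
    apply is_RInt_opp in Hneg.
    replace (Phi a - Phi b) with (opp (minus (Phi b) (Phi a)))
      by (rewrite opp_minus; reflexivity).
    eapply is_RInt_ext; [|exact Hneg]. intros u _. unfold opp; simpl; ring. }
  assert (prpsi : Riemann_integrable psi a b) by (apply continuity_implies_RiemannInt; auto).
  assert (Hval : RiemannInt prpsi = Phi a - Phi b)
    by (rewrite <- RInt_Reals; now apply is_RInt_unique).
  assert (Hdecr : 0 <= Phi a - Phi b).
  { rewrite <- Hval, <- RInt_Reals. apply RInt_ge_0; auto.
    - apply ex_RInt_Reals_1; auto.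
    - intros; apply Hn; lra. }
  split; [exact Hdecr|].
  destruct (Int_spec f a b) as [E|[pr E]]; rewrite E; [exact Hdecr|].
  rewrite <- Hval. apply RiemannInt_P19; auto.
Qed.

Lemma exp_le (u v : R) : u <= v -> exp u <= exp v.
Proof. intros [H|H]; [left; now apply exp_increasing|rewrite H; lra]. Qed.

Lemma exp_ln_ratio (u v : R) : 0 < u -> 0 < v -> exp (ln u - ln v) = u / v.
Proof. intros; rewrite <- ln_div by auto. apply exp_ln, Rdiv_lt_0_compat; auto. Qed.

Definition tail_above (tau : R -> R) (M N : R) : Prop :=
  M <= N /\ forall u, N <= u -> M <= tau u.

Lemma tail_above_exists (t0 : R) (tau : R -> R) :
  (forall M, exists T, forall t, t0 <= t -> T <= t -> M <= tau t) ->
  forall M, t0 <= M -> exists N, tail_above tau M N.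
Proof.
  intros Hinf M HM. destruct (Hinf M) as [T HT]. exists (Rmax T M).
  assert (H1 := Rmax_l T M). assert (H2 := Rmax_r T M).
  split; [lra|]. intros u Hu. apply HT; lra.
Qed.

Section EventuallyPositiveSolution.

Variables (p tau y : R -> R) (a0 a1 a2 a3 : R).
Hypothesis p_cont : forall u, a0 <= u -> continuity_pt p u.
Hypothesis p_nonneg : forall u, a0 <= u -> 0 <= p u.
Hypothesis tau_cont : forall u, a0 <= u -> continuity_pt tau u.
Hypothesis tau_le : forall u, a0 <= u -> tau u <= u.
Hypothesis y_pos : forall u, a0 <= u -> 0 < y u.
Hypothesis y_deriv : forall u, a0 <= u -> derivable_pt_lim y u (- (p u * y (tau u))).
Hypothesis level1 : tail_above tau a0 a1.
Hypothesis level2 : tail_above tau a1 a2.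
Hypothesis level3 : tail_above tau a2 a3.

(* psi = -y', and g = -(ln y)' = psi / y. *)
Let psi (u : R) : R := p u * y (tau u).
Let g (u : R) : R := psi u / y u.
Let h (xi : R) : R := p xi * exp (Int p (tau xi) xi).

(* Beyond a1 the delayed argument stays in [a0, +oo), where y is positive
   and differentiable; so psi is continuous and nonnegative there. *)
Lemma psi_cont (u : R) : a1 <= u -> continuity_pt psi u.
Proof.
  destruct level1 as [H01 Ht1]. intros Hu. unfold psi.
  apply continuity_pt_mult; [apply p_cont; lra|].
  change (continuity_pt (comp y tau) u). apply continuity_pt_comp; [apply tau_cont; lra|].
  apply derivable_continuous_pt. eexists. apply y_deriv, Ht1; lra.
Qed.

Lemma psi_nonneg (u : R) : a1 <= u -> 0 <= psi u.
Proof.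
  destruct level1 as [H01 Ht1]. intros Hu. unfold psi.
  apply Rmult_le_pos; [apply p_nonneg; lra|left; apply y_pos, Ht1; lra].
Qed.

(* y' = -psi <= 0: a positive solution is eventually non-increasing. *)
Lemma y_nonincreasing (a b : R) : a1 <= a -> a <= b -> y b <= y a.
Proof.
  destruct level1 as [H01 _]. intros Ha Hab.
  destruct (antiderivative_comparison y psi (fun _ => 0) a b Hab) as [H _]; try lra.
  - intros u Hu. apply y_deriv; lra.
  - intros u Hu. apply psi_cont; lra.
  - intros u Hu. apply psi_nonneg; lra.
  - intros u Hu. apply psi_nonneg; lra.
Qed.

Lemma ln_y_deriv (u : R) : a0 <= u -> derivable_pt_lim (fun v => ln (y v)) u (- g u).
Proof.
  intros Hu. unfold g, psi.
  replace (- (p u * y (tau u) / y u)) with (/ y u * - (p u * y (tau u)))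
    by (field; apply Rgt_not_eq, y_pos; lra).
  change (derivable_pt_lim (comp ln y) u (/ y u * - (p u * y (tau u)))).
  apply derivable_pt_lim_comp; [apply y_deriv; lra|apply derivable_pt_lim_ln, y_pos; lra].
Qed.

Lemma log_decrease_bound (f : R -> R) (a b : R) :
  a1 <= a -> a <= b -> (forall u, a < u < b -> f u <= g u) ->
  Int f a b <= ln (y a) - ln (y b).
Proof.
  destruct level1 as [H01 _]. intros Ha Hab Hf.
  apply (antiderivative_comparison (fun v => ln (y v)) g f a b Hab); auto.
  - intros u Hu. apply ln_y_deriv; lra.
  - intros u Hu. apply continuity_pt_div; [apply psi_cont; lra|
      apply derivable_continuous_pt; eexists; apply y_deriv; lra|
      apply Rgt_not_eq, y_pos; lra].
  - intros u Hu. apply Rdiv_le_0_compat; [apply psi_nonneg; lra|apply y_pos; lra].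
Qed.

(* Since y decreases and tau u <= u, y (tau u) >= y u, hence p <= g. *)
Lemma p_le_g (u : R) : a2 <= u -> p u <= g u.
Proof.
  destruct level1 as [H01 _]; destruct level2 as [H12 Ht2]. intros Hu.
  assert (Hyu : 0 < y u) by (apply y_pos; lra).
  assert (Hmono : y u <= y (tau u)) by (apply y_nonincreasing; [apply Ht2|apply tau_le]; lra).
  unfold g, psi. apply (Rmult_le_reg_r (y u)); auto.
  unfold Rdiv. rewrite Rmult_assoc, Rinv_l, Rmult_1_r by lra.
  apply Rmult_le_compat_l; [apply p_nonneg; lra|exact Hmono].
Qed.

(* First iteration: h <= g, by integrating p <= g over [tau xi, xi]. *)
Lemma h_le_g (xi : R) : a3 <= xi -> h xi <= g xi.
Proof.
  destruct level1 as [H01 _]; destruct level2 as [H12 _]; destruct level3 as [H23 Ht3].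
  intros Hxi.
  assert (Htx : a2 <= tau xi <= xi) by (split; [apply Ht3|apply tau_le]; lra).
  assert (Hlog : Int p (tau xi) xi <= ln (y (tau xi)) - ln (y xi)).
  { apply log_decrease_bound; try lra. intros u Hu. apply p_le_g; lra. }
  unfold h, g, psi.
  replace (p xi * y (tau xi) / y xi) with (p xi * (y (tau xi) / y xi)) by (unfold Rdiv; ring).
  rewrite <- exp_ln_ratio by (apply y_pos; lra).
  apply Rmult_le_compat_l; [apply p_nonneg; lra|now apply exp_le].
Qed.

(* Second iteration: integrating h <= g over [tau s, c]. *)
Lemma integrand_bound (s c : R) :
  a0 <= s -> a3 <= tau s -> tau s <= c -> p s * exp (Int h (tau s) c) <= psi s / y c.
Proof.
  destruct level1 as [H01 _]; destruct level2 as [H12 _]; destruct level3 as [H23 _].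
  intros Hs0 Hs Hsc.
  assert (Hlog : Int h (tau s) c <= ln (y (tau s)) - ln (y c)).
  { apply log_decrease_bound; try lra. intros u Hu. apply h_le_g; lra. }
  unfold psi. replace (p s * y (tau s) / y c) with (p s * (y (tau s) / y c))
    by (unfold Rdiv; ring).
  rewrite <- exp_ln_ratio by (apply y_pos; lra).
  apply Rmult_le_compat_l; [apply p_nonneg; lra|now apply exp_le].
Qed.

(* Final integration over [c, b]: the value is at most (y c - y b) / y c < 1. *)
Lemma delay_integral_lt_one (c b : R) :
  a1 <= c -> c <= b -> (forall s, c < s < b -> a3 <= tau s <= c) ->
  Int (fun s => p s * exp (Int h (tau s) c)) c b < 1.
Proof.
  destruct level1 as [H01 _]. intros Hc Hcb Hs.
  assert (Hyc : 0 < y c) by (apply y_pos; lra).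
  assert (Hyb : 0 < y b) by (apply y_pos; lra).
  destruct (antiderivative_comparison (fun u => / y c * y u) (fun u => / y c * psi u)
              (fun s => p s * exp (Int h (tau s) c)) c b Hcb) as [_ Hbound].
  - intros u Hu. replace (- (/ y c * psi u)) with (/ y c * - (p u * y (tau u)))
      by (unfold psi; ring).
    change (derivable_pt_lim (mult_real_fct (/ y c) y) u (/ y c * - (p u * y (tau u)))).
    apply derivable_pt_lim_scal, y_deriv; lra.
  - intros u Hu. change (continuity_pt (mult_real_fct (/ y c) psi) u).
    apply continuity_pt_scal, psi_cont; lra.
  - intros u Hu. apply Rmult_le_pos; [left; now apply Rinv_0_lt_compat|apply psi_nonneg; lra].
  - intros s Hs'. destruct (Hs s Hs').
    replace (/ y c * psi s) with (psi s / y c) by (unfold Rdiv; ring).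
    apply integrand_bound; lra.
  - assert (0 < / y c * y b) by (apply Rmult_lt_0_compat; [apply Rinv_0_lt_compat|]; lra).
    assert (/ y c * y c = 1) by (field; lra).
    lra.
Qed.

End EventuallyPositiveSolution.

Lemma no_eventually_positive_solution (t0 : R) (p tau sigma y : R -> R) (T1 N : R) :
  cont_from t0 p -> cont_from t0 tau ->
  (forall t, t0 <= t -> 0 <= p t) ->
  (forall t, t0 <= t -> tau t <= t) ->
  (forall M, exists T, forall t, t0 <= t -> T <= t -> M <= tau t) ->
  (forall a b, t0 <= a -> a <= b -> sigma a <= sigma b) ->
  (forall t, t0 <= t -> tau t <= sigma t /\ sigma t <= t) ->
  limsup_gt
    (fun t => Int (fun s => p s * exp (Int (fun xi => p xi * exp (Int p (tau xi) xi))
                                            (tau s) (sigma t)))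
                  (sigma t) t) 1 ->
  (forall u, T1 < u -> derivable_pt_lim y u (- (p u * y (tau u)))) ->
  (forall u, N <= u -> 0 < y u) -> False.
Proof.
  intros Hpc Htc Hp0 Htle Hinf Hsm Hsig [c [Hc1 Hc]] Hd Hy.
  set (a0 := Rmax N (Rmax (T1 + 1) (t0 + 1))).
  assert (Ha0N : N <= a0) by apply Rmax_l.
  assert (Ha0T : T1 + 1 <= a0) by (eapply Rle_trans; [apply Rmax_l|apply Rmax_r]).
  assert (Ha0t : t0 + 1 <= a0) by (eapply Rle_trans; [apply Rmax_r|apply Rmax_r]).
  destruct (tail_above_exists t0 tau Hinf a0) as [a1 L1]; [lra|].
  assert (O1 := proj1 L1).
  destruct (tail_above_exists t0 tau Hinf a1) as [a2 L2]; [lra|].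
  assert (O2 := proj1 L2).
  destruct (tail_above_exists t0 tau Hinf a2) as [a3 L3]; [lra|].
  assert (O3 := proj1 L3).
  destruct (tail_above_exists t0 tau Hinf a3) as [a4 [O4 Ht4]]; [lra|].
  destruct (tail_above_exists t0 tau Hinf a4) as [a5 [O5 Ht5]]; [lra|].
  destruct (Hc a5) as [t [Ht Hct]].
  assert (Hta : a4 <= tau t) by (apply Ht5; lra).
  destruct (Hsig t ltac:(lra)) as [Hs1 Hs2].
  enough (Hlt : Int (fun s => p s * exp (Int (fun xi => p xi * exp (Int p (tau xi) xi))
                                          (tau s) (sigma t))) (sigma t) t < 1) by lra.
  apply (delay_integral_lt_one p tau y a0 a1 a2 a3); auto; try lra.
  - intros u Hu. apply (continuity_pt_of_cont_from t0); auto; lra.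
  - intros u Hu. apply Hp0; lra.
  - intros u Hu. apply (continuity_pt_of_cont_from t0); auto; lra.
  - intros u Hu. apply Htle; lra.
  - intros u Hu. apply Hy; lra.
  - intros u Hu. apply Hd; lra.
  - intros s Hs. split; [apply Ht4; lra|].
    destruct (Hsig s ltac:(lra)) as [Hs3 _].
    assert (sigma s <= sigma t) by (apply Hsm; lra).
    lra.
Qed.

Lemma positive_of_nonvanishing (x : R -> R) (a : R) :
  (forall u, a <= u -> continuity_pt x u) -> (forall u, a <= u -> x u <> 0) ->
  0 < x a -> forall u, a <= u -> 0 < x u.
Proof.
  intros Hc Hnz Ha u Hu. destruct (Rlt_le_dec 0 (x u)) as [H|H]; [exact H|exfalso].
  destruct H as [H|H]; [|apply (Hnz u); lra].
  assert (Hau : a < u) by (destruct Hu as [Hu|Hu]; [exact Hu|subst; lra]).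
  destruct (Ranalysis5.IVT_interv (- x)%F a u) as [z [Hz1 Hz2]]; auto.
  - intros v Hv. apply continuity_pt_opp, Hc; lra.
  - unfold opp_fct; lra.
  - unfold opp_fct; lra.
  - apply (Hnz z); [lra|]. unfold opp_fct in Hz2; lra.
Qed.

Lemma constant_sign_of_nonvanishing (x : R -> R) (a : R) :
  (forall u, a <= u -> continuity_pt x u) -> (forall u, a <= u -> x u <> 0) ->
  (forall u, a <= u -> 0 < x u) \/ (forall u, a <= u -> 0 < - x u).
Proof.
  intros Hc Hnz. destruct (Rtotal_order (x a) 0) as [Hneg|[Hz|Hpos]].
  - right. apply (positive_of_nonvanishing (fun v => - x v)); [| |lra].
    + intros u Hu. apply (continuity_pt_opp x), Hc; lra.
    + intros u Hu Hu0. apply (Hnz u Hu). lra.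
  - exfalso. apply (Hnz a); [lra|exact Hz].
  - left. now apply positive_of_nonvanishing.
Qed.

(* The equation is linear, so -x solves it whenever x does. *)
Lemma opp_solution_deriv (p tau x : R -> R) (u : R) :
  derivable_pt_lim x u (- (p u * x (tau u))) ->
  derivable_pt_lim (fun v => - x v) u (- (p u * - x (tau u))).
Proof.
  intros Hd. replace (- (p u * - x (tau u))) with (- - (p u * x (tau u))) by ring.
  change (derivable_pt_lim (- x)%F u (- - (p u * x (tau u)))).
  now apply derivable_pt_lim_opp.
Qed.

Theorem corollary3p1 (t0 : R) (p tau sigma : R -> R) :
  cont_from t0 p -> cont_from t0 tau ->
  (forall t, t0 <= t -> 0 <= p t) ->
  (forall t, t0 <= t -> 0 <= tau t) ->
  (forall t, t0 <= t -> tau t <= t) ->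
  (forall M, exists T, forall t, t0 <= t -> T <= t -> M <= tau t) ->
  cont_from t0 sigma ->
  (forall a b, t0 <= a -> a <= b -> sigma a <= sigma b) ->
  (forall t, t0 <= t -> tau t <= sigma t /\ sigma t <= t) ->
  limsup_gt
    (fun t => Int (fun s => p s * exp (Int (fun xi => p xi * exp (Int p (tau xi) xi))
                                            (tau s) (sigma t)))
                  (sigma t) t) 1 ->
  forall x, is_solution t0 p tau x -> oscillatory x.
Proof.
  intros Hpc Htc Hp0 _ Htle Hinf _ Hsm Hsig Hls x [T0 [T1 [_ [_ [_ Hder]]]]] T.
  assert (Hd : forall u, T1 < u -> derivable_pt_lim x u (- (p u * x (tau u))))
    by (intros u Hu; exact (derivable_pt_lim_of_deriv_from T1 x _ u Hder Hu)).
  apply NNPP. intros Hnot.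
  set (a := Rmax T (T1 + 1)).
  assert (HaT := Rmax_l T (T1 + 1)). assert (HaT1 := Rmax_r T (T1 + 1)).
  destruct (constant_sign_of_nonvanishing x a) as [Hpos|Hneg].
  - intros u Hu. apply derivable_continuous_pt. eexists. apply Hd. fold a in HaT1; lra.
  - intros u Hu Hx0. apply Hnot. exists u. fold a in HaT; split; [lra|exact Hx0].
  - apply (no_eventually_positive_solution t0 p tau sigma x T1 a); auto.
  - apply (no_eventually_positive_solution t0 p tau sigma (fun v => - x v) T1 a); auto.
    intros u Hu. now apply opp_solution_deriv, Hd.
Qed.
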